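(* Let $n,m\ge 1$, $X=\{x_1,\dots,x_m\}$, and for each $1\le i\le n$ let $A_i,B_i$ be nonempty subsets of $X$ with $A_i\cap B_i=\emptyset$. Let $Y=\{y_1,\dots,y_n\}$ be a set disjoint from $X$, and let $\Sigma'$ be the set of implications on $X\cup Y$ consisting of $(A_i\cup (Y\setminus\{y_i\}))\rightarrow B_i$ for $1\le i\le n$, together with $Y\rightarrow X$. Then the closure system on $X\cup Y$ associated with $\Sigma'$ is a convex geometry.
   Context: A closure operator on a set $X$ is a map $\phi:\mathcal P(X)\to\mathcal P(X)$ that is extensive, monotone and idempotent; its image consists of the closed sets. An implication on a set $Z$ is a pair $A\rightarrow B$ with $A,B\subseteq Z$, $B\ne\emptyset$. For a set $\Sigma$ of implications on $Z$, the associated closure system has as closed sets exactly the $S\subseteq Z$ such that $A\subseteq S$ implies $B\subseteq S$ for every $(A\rightarrow B)\in\Sigma$. A convex geometry is a finite closure system $\langle Z,\phi\rangle$ with $\phi(\emptyset)=\emptyset$ satisfying the anti-exchange property: for every closed set $A\subsetneq Z$ and all distinct $x,y\in Z\setminus A$, $y\notin\phi(A\cup\{x\})$ or $x\notin\phi(A\cup\{y\})$ (equivalently, for every closed $A\subsetneq Z$ there is $x\in Z\setminus A$ with $A\cup\{x\}$ closed). *)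

From mathcomp Require Import all_boot.
Set Implicit Arguments. Unset Strict Implicit. Unset Printing Implicit Defensive.

Section Closure.
Variable T : finType.

Definition implication := ({set T} * {set T})%type.

Definition wf_implication (p : implication) : bool := p.2 != set0.

Definition closed_for (Sigma : seq implication) (S : {set T}) : bool :=
  all (fun p : implication => (p.1 \subset S) ==> (p.2 \subset S)) Sigma.

Definition closure_of (closed : pred {set T}) (S : {set T}) : {set T} :=
  \bigcap_(C | closed C && (S \subset C)) C.

(* The family of closed sets forms a closure system: closed under arbitrary
   intersections (the empty intersection being the whole set T). *)
Definition closure_system (closed : pred {set T}) : Prop :=
  forall F : {set {set T}}, (forall C, C \in F -> closed C) ->
    closed (\bigcap_(C in F) C).

Definition convex_geometry (closed : pred {set T}) : Prop :=
  [/\ closure_system closed,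
      closure_of closed set0 = set0 &
      forall A : {set T}, closed A -> A != setT ->
        forall x y : T, x != y -> x \notin A -> y \notin A ->
          (y \notin closure_of closed (x |: A)) ||
          (x \notin closure_of closed (y |: A))].
End Closure.

(* The implication set Sigma' on X u Y, with X = 'I_m (as inl) and Y = 'I_n (as inr). *)
Definition Sigma' (m n : nat) (A B : 'I_n -> {set 'I_m})
  : seq (implication ('I_m + 'I_n)%type) :=
  [seq ((inl @: A i) :|: (inr @: (~: [set i])), inl @: B i) | i <- enum 'I_n]
  ++ [:: (inr @: [set: 'I_n], inl @: [set: 'I_m])].

From mathcomp Require Import all_boot.
Set Implicit Arguments. Unset Strict Implicit. Unset Printing Implicit Defensive.

(* Let S miss some element of Y.  The implication (A_i u Y\{y_i}) -> B_i can
   fire on S only when y_i is the unique element of Y missing from S, and firing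
   it adds elements of X only; so one round of firing, [fire S], is already
   closed and hence contains the closure of S.  Now let X be closed and proper,
   so X misses some y_i.  If x completes Y, then x = y_i cannot be produced from
   y |: X.  Otherwise, if y is produced from x |: X and x from y |: X, the same
   implication i produces both.  Then x lies in A_i (else A_i is inside X and
   closedness puts y, an element of B_i, in X), while x lies in B_i: this
   contradicts A_i :&: B_i = set0. *)

Lemma closed_for_closure_system (T : finType) (Sigma : seq (implication T)) :
  closure_system (closed_for Sigma).
Proof.
move=> F closedF; apply/allP => p pSigma; apply/implyP => p1_sub.
apply/subsetP => z zp2; apply/bigcapP => C CF.
have /allP /(_ p pSigma) /implyP closedC := closedF C CF.
apply: (subsetP (closedC _)) zp2.
exact: subset_trans p1_sub (bigcap_inf _ CF).
Qed.

Lemma closure_of_min (T : finType) (closed : pred {set T}) (S C : {set T}) :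
  closed C -> S \subset C -> closure_of closed S \subset C.
Proof. by move=> closedC SC; apply: bigcap_inf; rewrite closedC. Qed.

Lemma subsetU1_notin (T : finType) (U X : {set T}) (z : T) :
  U \subset z |: X -> z \notin U -> U \subset X.
Proof.
move=> /subsetP UzX zU; apply/subsetP => u uU.
have := UzX u uU; rewrite in_setU1 => /orP [/eqP uz|//].
by rewrite -uz uU in zU.
Qed.

Section SigmaPrime.
Variables (m n : nat) (A B : 'I_n -> {set 'I_m}).
Local Notation T := ('I_m + 'I_n)%type.
Local Notation inL := (@inl 'I_m 'I_n).
Local Notation inR := (@inr 'I_m 'I_n).
Local Notation Y := (inR @: [set: 'I_n]).
Local Notation closed := (closed_for (Sigma' A B)).

Lemma closed_SigmaP (S : {set T}) :
  closed S <->
  (forall i, inL @: A i :|: inR @: (~: [set i]) \subset S -> inL @: B i \subset S)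
  /\ (Y \subset S -> inL @: [set: 'I_m] \subset S).
Proof.
rewrite /closed_for all_cat all_map /= andbT; split.
  case/andP => /allP closed_i /implyP closedY; split=> // i.
  by apply/implyP; apply: closed_i; rewrite mem_enum.
case=> closed_i closedY; apply/andP; split; last exact/implyP.
by apply/allP => i _; apply/implyP/closed_i.
Qed.

Lemma closed_proper_notin_Y (X : {set T}) :
  closed X -> X != setT -> ~~ (Y \subset X).
Proof.
move=> /closed_SigmaP [_ closedY] XT; apply: contra XT => YX.
apply/eqP/setP => [[a|k]]; rewrite inE.
  by apply: (subsetP (closedY YX)); apply: imset_f.
by apply: (subsetP YX); apply: imset_f.
Qed.

Lemma closed_set0 : 0 < n -> (forall i, A i != set0) -> closed set0.
Proof.
move=> n_gt0 A_neq0; apply/closed_SigmaP; split.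
  move=> i; rewrite subset0 setU_eq0 => /andP [Ai0 _].
  by have := A_neq0 i; rewrite -(imset_eq0 inL) Ai0.
by move=> /subsetP /(_ (inR (Ordinal n_gt0))); rewrite imset_f ?inE // => /(_ isT).
Qed.

Definition fires (S : {set T}) (j : 'I_n) : bool :=
  [&& inR j \notin S, inR @: (~: [set j]) \subset S & inL @: A j \subset S].

Definition fire (S : {set T}) : {set T} :=
  S :|: \bigcup_(j | fires S j) inL @: B j.

Lemma fires_unique (S : {set T}) j k : fires S j -> inR k \notin S -> j = k.
Proof.
case/and3P => _ Yj_sub _; apply: contraNeq => jk.
by apply: (subsetP Yj_sub); apply: imset_f; rewrite !inE eq_sym.
Qed.

Lemma mem_fire_Y (S : {set T}) z : z \in Y -> (z \in fire S) = (z \in S).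
Proof.
case/imsetP => k _ ->; rewrite in_setU orb_idr //.
by case/bigcupP => j _ /imsetP [].
Qed.

Lemma mem_fire (S : {set T}) z :
  z \notin S -> z \in fire S -> exists2 j, fires S j & z \in inL @: B j.
Proof. by move=> zS; rewrite in_setU (negbTE zS) => /bigcupP [j]; exists j. Qed.

Lemma fire_closed (S : {set T}) : ~~ (Y \subset S) -> closed (fire S).
Proof.
move=> YS; apply/closed_SigmaP; split => [i premise|]; last first.
  move=> Y_fire; case/negP: YS; apply/subsetP => z zY.
  by rewrite -(mem_fire_Y S zY); apply: (subsetP Y_fire).
have Yi_sub : inR @: (~: [set i]) \subset S.
  apply/subsetP => _ /imsetP [k ki ->]; rewrite -mem_fire_Y ?imset_f //.
  by apply: (subsetP premise); rewrite in_setU imset_f ?orbT.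
have yiS : inR i \notin S.
  apply: contra YS => yiS; apply/subsetP => _ /imsetP [k _ ->].
  have [-> //|ki] := eqVneq k i.
  by apply: (subsetP Yi_sub); apply: imset_f; rewrite !inE.
have fires_i : fires S i.
  rewrite /fires yiS Yi_sub; apply/subsetP => z zAi.
  have zfire : z \in fire S by apply: (subsetP premise); rewrite in_setU zAi.
  apply: contraT => zS.
  have [j fires_j _] := mem_fire zS zfire.
  have ji := fires_unique fires_j yiS; subst j.
  by case/and3P: fires_j => _ _ /subsetP /(_ z zAi); rewrite (negbTE zS).
by apply/subsetP => z zBi; rewrite in_setU; apply/orP; right; apply/bigcupP; exists i.
Qed.

Lemma closure_sub_fire (S : {set T}) :
  ~~ (Y \subset S) -> closure_of closed S \subset fire S.
Proof. by move=> YS; apply: closure_of_min (fire_closed YS) (subsetUl _ _). Qed.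

Lemma notin_closure_missing_Y (X : {set T}) x y :
  ~~ (Y \subset X) -> Y \subset x |: X -> x \notin X -> y != x ->
  x \notin closure_of closed (y |: X).
Proof.
move=> YX YxX xX yx.
have xY : x \in Y by apply: contraNT YX; apply: subsetU1_notin.
have xyX : x \notin y |: X by rewrite in_setU1 eq_sym (negbTE yx).
have YyX : ~~ (Y \subset y |: X) by apply: contra xyX => /subsetP; apply.
by apply: contra xyX => /(subsetP (closure_sub_fire YyX)); rewrite mem_fire_Y.
Qed.

Lemma fire_anti_exchange (X : {set T}) x y :
  (forall i, A i :&: B i = set0) -> closed X ->
  x != y -> x \notin X -> y \notin X ->
  y \in fire (x |: X) -> x \in fire (y |: X) -> False.
Proof.
move=> AB0 /closed_SigmaP [closed_i _] xy xX yX y_fire x_fire.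
have yxX : y \notin x |: X by rewrite in_setU1 eq_sym (negbTE xy).
have xyX : x \notin y |: X by rewrite in_setU1 (negbTE xy).
have [j fires_j /imsetP [b bBj yb]] := mem_fire yxX y_fire.
have [k fires_k /imsetP [a aBk xa]] := mem_fire xyX x_fire.
subst x y.
case/and3P: fires_j => yjX Yj_sub Aj_sub.
have yj_notin : inR j \notin inL b |: X by move: yjX; rewrite !in_setU1.
have kj := fires_unique fires_k yj_notin; subst k.
suff aAj : a \in A j by have := AB0 j; move/setP/(_ a); rewrite !inE aAj aBk.
apply: contraT => aAj; case/negP: yX.
apply: (subsetP (closed_i j _)); last exact: imset_f.
rewrite subUset (subsetU1_notin Aj_sub) ?(subsetU1_notin Yj_sub) //.
  by apply/imsetP => -[].
by apply: contra aAj => /imsetP [a' a'Aj [->]].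
Qed.

Lemma closed_anti_exchange (X : {set T}) x y :
  (forall i, A i :&: B i = set0) -> closed X -> ~~ (Y \subset X) ->
  x != y -> x \notin X -> y \notin X ->
  (y \notin closure_of closed (x |: X)) || (x \notin closure_of closed (y |: X)).
Proof.
move=> AB0 closedX YX xy xX yX.
have [YxX|YxX] := boolP (Y \subset x |: X).
  by rewrite (notin_closure_missing_Y YX YxX xX) ?orbT // eq_sym.
have [YyX|YyX] := boolP (Y \subset y |: X).
  by rewrite (notin_closure_missing_Y YX YyX yX).
apply/norP => -[/negbNE /(subsetP (closure_sub_fire YxX)) y_fire
                /negbNE /(subsetP (closure_sub_fire YyX)) x_fire].
exact: fire_anti_exchange AB0 closedX xy xX yX y_fire x_fire.
Qed.

End SigmaPrime.

Theorem claim1 (m n : nat) (A B : 'I_n -> {set 'I_m}) :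
  0 < m -> 0 < n ->
  (forall i, A i != set0) ->
  (forall i, B i != set0) ->
  (forall i, A i :&: B i = set0) ->
  convex_geometry (closed_for (Sigma' A B)).
Proof.
move=> _ n_gt0 A_neq0 _ AB0; split.
- exact: closed_for_closure_system.
- by apply/eqP; rewrite -subset0 closure_of_min ?closed_set0.
- move=> X closedX XT x y xy xX yX.
  apply: closed_anti_exchange => //.
  exact: closed_proper_notin_Y closedX XT.
Qed.
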